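(* Let $G$ be a group with unit $e$, $X$ a set and $(X_g,\alpha_g)_{g\in G}$ a partial action datum of $G$ on $X$. Then the datum is a lax partial action of $G$ on $X$ if and only if the assignment $g\mapsto \alpha'(g)=(X_{g^{-1}},\iota_g,\alpha_g)$ is a lax functor from $G$ (viewed as a bicategory with one $0$-cell, elements of $G$ as $1$-cells, composition given by multiplication, and only identity $2$-cells) to $\mathsf{Par}(X,X)$.
   Context: A partial action datum of $G$ on $X$ is a family of subsets $X_g\subseteq X$ ($g\in G$) together with maps $\alpha_g:X_{g^{-1}}\to X$; $\iota_g:X_{g^{-1}}\to X$ is the inclusion. It is a lax partial action if (LPA1) $X_e=X$ and $\alpha_e=\mathrm{id}_X$; (LPA2) $X_{g^{-1}}\cap\alpha_g^{-1}(X_{h^{-1}})\subseteq X_{(hg)^{-1}}$ for all $g,h$; (LPA3) $\alpha_h\circ\alpha_g=\alpha_{hg}$ on $X_{g^{-1}}\cap\alpha_g^{-1}(X_{h^{-1}})$. $\mathsf{Par}(X,X)$ is the category whose objects are spans $(A,f,a)$ from $X$ to $X$ with $f:A\to X$ injective, whose morphisms $(A,f,a)\to(B,f',b)$ are maps $t:A\to B$ with $f't=f$ and $bt=a$ (so it is a preorder), and whose horizontal composition is composition of spans by pullback: $(B,f',b)\bullet(A,f,a)$ has apex $\{x\in A: a(x)\in f'(B)\}$ with the evident legs. Since $\mathsf{Par}(X,X)$ is locally a preorder, a lax functor $F$ from $G$ to it amounts to $1$-cells $F(g)$ together with the existence of $2$-cells $(X,\mathrm{id}_X,\mathrm{id}_X)\Rightarrow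 F(e)$ and $F(h)\bullet F(g)\Rightarrow F(hg)$ for all $g,h\in G$. *)

Set Implicit Arguments.


Definition is_group (G : Type) (mul : G -> G -> G) (e : G) (inv : G -> G) : Prop :=
  (forall a b c, mul a (mul b c) = mul (mul a b) c) /\
  (forall a, mul e a = a) /\ (forall a, mul a e = a) /\
  (forall a, mul (inv a) a = e) /\ (forall a, mul a (inv a) = e).

(** A partial action datum: subsets Xs g (= X_g) and maps
    alpha g : X_{g^{-1}} -> X. *)

Definition lax_partial_action (G X : Type) (mul : G -> G -> G) (e : G) (inv : G -> G)
  (Xs : G -> X -> Prop) (alpha : forall g : G, {x : X | Xs (inv g) x} -> X) : Prop :=
  ((forall x, Xs e x) /\
   (forall x (hx : Xs (inv e) x), alpha e (exist _ x hx) = x)) /\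
  (forall g h x (hx : Xs (inv g) x),
      Xs (inv h) (alpha g (exist _ x hx)) -> Xs (inv (mul h g)) x) /\
  (forall g h x (hx : Xs (inv g) x) (hy : Xs (inv h) (alpha g (exist _ x hx)))
      (hz : Xs (inv (mul h g)) x),
      alpha h (exist _ (alpha g (exist _ x hx)) hy) = alpha (mul h g) (exist _ x hz)).

Record span (X : Type) : Type := Span {
  apex : Type;
  lleg : apex -> X;
  rleg : apex -> X
}.
Arguments Span {X} apex lleg rleg.

Definition par_obj (X : Type) (S : span X) : Prop :=
  forall u v : apex S, lleg S u = lleg S v -> u = v.

(** 2-cells S => T in Par(X,X) (a preorder: only existence matters). *)
Definition par_cell (X : Type) (S T : span X) : Prop :=
  exists t : apex S -> apex T,
    (forall u, lleg T (t u) = lleg S u) /\ (forall u, rleg T (t u) = rleg S u).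

Definition id_span (X : Type) : span X := Span X (fun x => x) (fun x => x).

(** Horizontal composition T • S (S first, then T), by pullback. *)
Definition span_comp (X : Type) (T S : span X) : span X :=
  Span {p : apex S * apex T | rleg S (fst p) = lleg T (snd p)}
       (fun p => lleg S (fst (proj1_sig p)))
       (fun p => rleg T (snd (proj1_sig p))).

Definition lax_functor_to_Par (G X : Type) (mul : G -> G -> G) (e : G)
  (F : G -> span X) : Prop :=
  (forall g, par_obj (F g)) /\
  par_cell (id_span X) (F e) /\
  (forall g h, par_cell (span_comp (F h) (F g)) (F (mul h g))).

Definition alpha' (G X : Type) (inv : G -> G) (Xs : G -> X -> Prop)
  (alpha : forall g : G, {x : X | Xs (inv g) x} -> X) (g : G) : span X :=
  Span {x : X | Xs (inv g) x} (fun u => proj1_sig u) (alpha g).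

(** The spans [alpha' g] all have a subset [X_{g^-1}] of [X] as apex and its
    inclusion as left leg, and a 2-cell from any span [S] into such a span
    exists exactly when the left leg of [S] lands in the subset and the right
    legs agree there: the 2-cell is forced to be [u |-> lleg S u].  For the
    unit cell this says [X_{e^-1} = X] and [alpha_e = id], i.e. (LPA1); for
    the composite [alpha' h • alpha' g], whose apex is
    [X_{g^-1} ∩ alpha_g^-1(X_{h^-1})], it says (LPA2) and (LPA3) for [g, h]. *)

From Stdlib Require Import Setoid ProofIrrelevance.

Lemma group_inv_unit {G : Type} {mul : G -> G -> G} {e : G} {inv : G -> G} :
  is_group mul e inv -> inv e = e.
Proof.
  intros [_ [_ [mul_e [mulVg _]]]].
  rewrite <- (mul_e (inv e)). apply mulVg.
Qed.

Section SubsetSpans.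

Context {X : Type}.

Definition subset_span {P : X -> Prop} (a : {x : X | P x} -> X) : span X :=
  Span {x : X | P x} (fun u => proj1_sig u) a.

Lemma subset_span_par_obj {P : X -> Prop} (a : {x : X | P x} -> X) :
  par_obj (subset_span a).
Proof.
  intros [x hx] [y hy]. simpl. intros <-.
  apply subset_eq_compat. reflexivity.
Qed.

Lemma par_cell_subset_span_iff (S : span X) {P : X -> Prop} (a : {x : X | P x} -> X) :
  par_cell S (subset_span a) <->
  (forall u, P (lleg S u)) /\
  (forall u (hu : P (lleg S u)), a (exist _ (lleg S u) hu) = rleg S u).
Proof.
  split.
  - intros [t [t_lleg t_rleg]]. simpl in t_lleg.
    split.
    + intro u. rewrite <- t_lleg. apply proj2_sig.
    + intros u hu. rewrite <- t_rleg. simpl. f_equal.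
      specialize (t_lleg u). destruct (t u) as [x hx]. simpl in t_lleg.
      apply subset_eq_compat. symmetry. exact t_lleg.
  - intros [hP a_rleg].
    exists (fun u => exist _ (lleg S u) (hP u)). split; intro u.
    + reflexivity.
    + apply a_rleg.
Qed.

Context {P Q : X -> Prop}.
Variables (a : {x : X | P x} -> X) (b : {y : X | Q y} -> X).

Definition comp_point (x : X) (hx : P x) (hy : Q (a (exist _ x hx))) :
  apex (span_comp (subset_span b) (subset_span a)) :=
  exist _ (exist _ x hx, exist _ (a (exist _ x hx)) hy) eq_refl.

Lemma forall_comp_apex (R : apex (span_comp (subset_span b) (subset_span a)) -> Prop) :
  (forall p, R p) <-> (forall x hx hy, R (comp_point x hx hy)).
Proof.
  split.
  - intros HR x hx hy. apply HR.
  - intros HR [[[x hx] [y hy]] ax_y]. simpl in ax_y. subst y. apply HR.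
Qed.

End SubsetSpans.

Section AlphaPrime.

Context {G X : Type} {mul : G -> G -> G} {e : G} {inv : G -> G}.
Context {Xs : G -> X -> Prop} {alpha : forall g : G, {x : X | Xs (inv g) x} -> X}.

Lemma alpha'_unit_cell_iff (inv_e : inv e = e) :
  par_cell (id_span X) (alpha' inv Xs alpha e) <->
  (forall x, Xs e x) /\ (forall x (hx : Xs (inv e) x), alpha e (exist _ x hx) = x).
Proof.
  rewrite (par_cell_subset_span_iff (id_span X) (alpha e)). simpl.
  split; intros [dom_e alpha_e]; split; try exact alpha_e; intro x.
  - rewrite <- inv_e. apply dom_e.
  - rewrite inv_e. apply dom_e.
Qed.

Lemma alpha'_comp_cell_iff (g h : G) :
  par_cell (span_comp (alpha' inv Xs alpha h) (alpha' inv Xs alpha g))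
           (alpha' inv Xs alpha (mul h g)) <->
  (forall x (hx : Xs (inv g) x),
      Xs (inv h) (alpha g (exist _ x hx)) -> Xs (inv (mul h g)) x) /\
  (forall x (hx : Xs (inv g) x) (hy : Xs (inv h) (alpha g (exist _ x hx)))
      (hz : Xs (inv (mul h g)) x),
      alpha h (exist _ (alpha g (exist _ x hx)) hy) = alpha (mul h g) (exist _ x hz)).
Proof.
  rewrite (par_cell_subset_span_iff _ (alpha (mul h g))).
  rewrite (forall_comp_apex (alpha g) (alpha h)), (forall_comp_apex (alpha g) (alpha h)).
  simpl. split; intros [dom_comp alpha_comp]; split; try exact dom_comp;
    intros; symmetry; apply alpha_comp.
Qed.

End AlphaPrime.

Theorem mainTheorem2 (G X : Type) (mul : G -> G -> G) (e : G) (inv : G -> G)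
  (HG : @is_group G mul e inv)
  (Xs : G -> X -> Prop) (alpha : forall g : G, {x : X | Xs (inv g) x} -> X) :
  @lax_partial_action G X mul e inv Xs alpha <->
  @lax_functor_to_Par G X mul e (@alpha' G X inv Xs alpha).
Proof.
  pose proof (group_inv_unit HG) as inv_e.
  split.
  - intros [LPA1 [LPA2 LPA3]]. split; [|split].
    + intro g. apply subset_span_par_obj.
    + apply alpha'_unit_cell_iff; assumption.
    + intros g h. apply alpha'_comp_cell_iff. split; [apply LPA2 | apply LPA3].
  - intros [_ [unit_cell comp_cell]]. split; [|split].
    + apply alpha'_unit_cell_iff; assumption.
    + intros g h. apply (alpha'_comp_cell_iff g h), comp_cell.
    + intros g h. apply (alpha'_comp_cell_iff g h), comp_cell.
Qed.
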